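(* Let $\mathcal{T}$ be an $\aleph_1$-directed poset, $X:\mathcal{T}\to\mathbf{Set}_*$ a diagram of pointed sets and $A$ an abelian group. Then $H(X,A)=0$, i.e. the natural map $\rho:(\lim_\mathcal{T}X)\wedge A\to\lim_\mathcal{T}(X\wedge A)$ is an isomorphism.
   Context: A poset $\mathcal{T}$ is $\aleph_1$-directed if every countable subset has an upper bound in $\mathcal{T}$; it is regarded as a category with a single morphism $t\to s$ whenever $t\ge s$. For a pointed set $Y$, $Y\wedge A:=\bigoplus_{Y\setminus\{*\}}A$ (finitely supported pointed maps $Y\to A$), functorial via $f_*(sv)=f(s)v$, where $sv$ is the element with value $v$ at $s$ ($*v=0$). $\rho(xv)(t)=x(t)v$; $G(X,A):=\lim_\mathcal{T}(X\wedge A)$, $K(X,A)=\mathrm{Im}\,\rho$, $H(X,A):=G(X,A)/K(X,A)$. *)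

From HB Require Import structures.
From mathcomp Require Import all_boot all_order all_algebra.
From mathcomp Require Import boolp classical_sets cardinality fsbigop.
Set Implicit Arguments. Unset Strict Implicit. Unset Printing Implicit Defensive.
Import Order.TTheory GRing.Theory.
Local Open Scope classical_set_scope.
Local Open Scope ring_scope.

Definition aleph1_directed (d : Order.disp_t) (T : porderType d) : Prop :=
  forall S : set T, countable S -> exists u : T, forall s, S s -> (s <= u)%O.

(* A diagram T -> Set_* : a morphism t -> s exists iff t >= s, so for s <= t
   we get a pointed map X t -> X s, functorially. *)
Record pdiagram (d : Order.disp_t) (T : porderType d) := PDiagram {
  obj :> T -> Type;
  pt : forall t, obj t;
  dmap : forall s t : T, (s <= t)%O -> obj t -> obj s;
  dmap_pt : forall s t (h : (s <= t)%O), dmap h (pt t) = pt s;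
  dmap_id : forall t (h : (t <= t)%O) x, dmap h x = x;
  dmap_comp : forall r s t (h1 : (r <= s)%O) (h2 : (s <= t)%O) (h3 : (r <= t)%O) x,
      dmap h1 (dmap h2 x) = dmap h3 x
}.

(* Y ∧ A for a pointed set (Y, y0): finitely supported pointed maps Y -> A *)
Definition smash (Y : Type) (y0 : Y) (A : zmodType) : set (Y -> A) :=
  [set g | g y0 = 0 /\ finite_set [set y | g y != 0]].

(* functoriality: f_*(s v) = f(s) v, i.e. (f_* g)(z) = sum_{f y = z} g y for z <> base *)
Definition push (Y Z : Type) (z0 : Z) (A : zmodType) (f : Y -> Z) (g : Y -> A)
  : Z -> A :=
  fun z => if `[< z = z0 >] then 0
           else \sum_(y \in [set y : {classic Y} | f y = z]) g y.

Section Lim.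
Context (d : Order.disp_t) (T : porderType d) (X : pdiagram T).

Definition limX : Type :=
  {x : forall t, X t | forall s t (h : (s <= t)%O), dmap h (x t) = x s}.

Lemma limX_pt_proof : forall s t (h : (s <= t)%O), dmap h (pt X t) = pt X s.
Proof. exact: dmap_pt. Qed.

Definition limX_pt : limX := exist _ (fun t => pt X t) limX_pt_proof.

Definition proj (t : T) (x : limX) : X t := proj1_sig x t.

Definition Glim (A : zmodType) : set (forall t, X t -> A) :=
  [set G | (forall t, smash (pt X t) (G t)) /\
           forall s t (h : (s <= t)%O), push (pt X s) (dmap h) (G t) = G s].

Definition rho (A : zmodType) (g : limX -> A) : forall t, X t -> A :=
  fun t => push (pt X t) (proj t) g.
End Lim.

Arguments Glim {d T} X A.
Arguments rho {d T} X {A} g.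
Arguments limX_pt {d T} X.

From HB Require Import structures.
From mathcomp Require Import all_boot all_order all_algebra.
From mathcomp Require Import boolp classical_sets cardinality fsbigop.
Set Implicit Arguments. Unset Strict Implicit. Unset Printing Implicit Defensive.
Import Order.TTheory GRing.Theory.
Local Open Scope classical_set_scope.
Local Open Scope ring_scope.

(* Since rho g at stage t is [push (proj t) g]:
   - rho lands in lim (X ∧ A) by functoriality ([rho_Glim]);
   - rho is injective because finitely many points of lim X are already
     separated at one stage ([lim_separated], [rho_injective]);
   - for surjectivity, the supports of the components of G ∈ lim (X ∧ A) are
     finite, their sizes grow along T, and ℵ1-directedness bounds them, so
     above a stage t0 of maximal size the transition maps restrict to
     bijections of supports.  Each support point at t0 then lies on a unique
     thread, a point of lim X, and pushing G t0 forward along the threads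
     gives a preimage of G ([rho_surjective]). *)

Lemma big_seq_single (A : zmodType) (I : eqType) (s : seq I) (P : pred I) (F : I -> A) y :
  uniq s -> y \in s -> (forall z, z \in s -> P z = (z == y)) ->
  \sum_(i <- s | P i) F i = F y.
Proof.
move=> us ys HP; rewrite big_mkcond (bigD1_seq y) //= HP // eqxx.
by rewrite big_seq_cond big1 ?addr0 // => i /andP[si ni]; rewrite HP // (negbTE ni).
Qed.

Lemma uniq_map_inj_in (I J : eqType) (f : I -> J) (s : seq I) :
  uniq (map f s) -> {in s &, injective f}.
Proof.
elim: s => // a s IH /= /andP[fa_notin us] x y; rewrite !inE.
case/orP=> [/eqP->|xs]; case/orP=> [/eqP->|ys] // e.
- by case/negP: fa_notin; rewrite e map_f.
- by case/negP: fa_notin; rewrite -e map_f.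
- exact: IH.
Qed.

Section Push.
Variable A : zmodType.

(* A duplicate-free enumeration of the support of [g] (meaningful when it is finite). *)
Definition supp_enum (Y : Type) (g : Y -> A) : seq {classic Y} :=
  finmap.enum_fset (fset_set [set y : {classic Y} | g y != 0]).

Lemma supp_enum_uniq (Y : Type) (g : Y -> A) : uniq (supp_enum g).
Proof. exact: finmap.fset_uniq. Qed.

Lemma mem_supp_enum (Y : Type) (g : Y -> A) : finite_set [set y | g y != 0] ->
  forall y, (y \in supp_enum g) = (g y != 0).
Proof.
move=> fin y; rewrite /supp_enum in_fset_set //.
by apply/idP/idP; rewrite ?mem_setE // => gy; rewrite mem_setE.
Qed.

Lemma push_seq (Y Z : Type) (z0 : Z) (f : Y -> Z) (g : Y -> A)
    (s : seq {classic Y}) z :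
  uniq s -> (forall y, g y != 0 -> y \in s) -> z <> z0 ->
  push z0 f g z = \sum_(y <- s | `[< f y = z >]) g y.
Proof.
move=> us sup nz; rewrite /push asboolF // [RHS]bigfs //; last first.
  by move=> y _ ny; apply/eqP; apply: contraNT ny => /sup.
by apply: eq_fsbigl; apply/seteqP; split => y /=; rewrite asboolE.
Qed.

Lemma push_neq0 (Y Z : Type) (z0 : Z) (f : Y -> Z) (g : Y -> A) z :
  push z0 f g z != 0 -> z <> z0 /\ exists2 y, f y = z & g y != 0.
Proof.
rewrite /push; case: asboolP => [//|nz]; first by rewrite eqxx.
move=> /(@fsbigN1 A 0 +%R unit {classic Y} _ (fun _ => g) tt) [y fy gy].
by split => //; exists y.
Qed.

Lemma push_smash (Y Z : Type) (z0 : Z) (f : Y -> Z) (g : Y -> A) :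
  finite_set [set y | g y != 0] -> smash z0 (push z0 f g).
Proof.
move=> fin; split; first by rewrite /push asboolT.
apply: (sub_finite_set _ (finite_image f fin)) => z nz.
by have [_ [y fy gy]] := push_neq0 nz; exists y.
Qed.

Lemma push_ext (Y Z : Type) (z0 : Z) (f f' : Y -> Z) (g : Y -> A) :
  (forall y, g y != 0 -> f y = f' y) -> push z0 f g = push z0 f' g.
Proof.
move=> ff'; apply/funext => z; rewrite /push; case: asboolP => // _.
rewrite fsbig_supp [RHS]fsbig_supp; apply: eq_fsbigl; apply/seteqP.
by split=> y /= [fy gy]; split=> //; rewrite -fy ?ff' //; apply/eqP.
Qed.

Lemma push_comp (Y Z W : Type) (z0 : Z) (w0 : W) (f : Y -> Z) (k : Z -> W)
    (g : Y -> A) :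
  k z0 = w0 -> finite_set [set y | g y != 0] ->
  push w0 k (push z0 f g) = push w0 (k \o f) g.
Proof.
move=> kz0 fin; apply/funext => w.
have [->|nw] := pselect (w = w0); first by rewrite /push !asboolT.
have ms := mem_supp_enum fin; set s := supp_enum g.
pose s' := undup [seq (f y : {classic Z}) | y : {classic Y} <- s].
have sup' (z : {classic Z}) : push z0 f g z != 0 -> z \in s'.
  by move=> nz; have [_ [y fy gy]] := push_neq0 nz; rewrite -fy mem_undup map_f // ms.
have sup y : g y != 0 -> y \in s by rewrite ms.
rewrite (push_seq _ (undup_uniq _) sup' nw) (push_seq _ (supp_enum_uniq g) sup nw).
transitivity (\sum_(z <- s' | `[< k z = w >]) \sum_(y <- s | `[< f y = z >]) g y).
  apply: eq_bigr => z /asboolP kz; apply: push_seq _ (supp_enum_uniq g) sup _.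
  by move=> ez; apply: nw; rewrite -kz ez.
rewrite (exchange_big_dep xpredT) //= [RHS]big_mkcond; apply: eq_big_seq => y ys.
have [/asboolP kfy|nkfy] := boolP `[< (k \o f) y = w >].
  rewrite (big_seq_single _ (undup_uniq _) (_ : (f y : {classic Z}) \in s')) //.
    by rewrite mem_undup map_f.
  by move=> z _; apply/andP/eqP => [[_ /asboolP <-] //|->]; split; apply/asboolP.
rewrite big1 // => z /andP[/asboolP kz /asboolP fz]; case/negP: nkfy.
by apply/asboolP; rewrite /= fz.
Qed.

Lemma push_at (Y Z : Type) (z0 : Z) (f : Y -> Z) (g : Y -> A)
    (s : seq {classic Y}) x :
  (forall y, g y != 0 -> y \in s) -> {in s &, injective f} -> x \in s ->
  f x <> z0 -> push z0 f g (f x) = g x.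
Proof.
move=> sup finj xs fx.
have sup' (y : {classic Y}) : g y != 0 -> y \in undup s by rewrite mem_undup => /sup.
rewrite (push_seq _ (undup_uniq s) sup' fx).
rewrite (big_seq_single _ (undup_uniq s) (_ : x \in undup s)) ?mem_undup // => y.
rewrite mem_undup => ys.
by apply/asboolP/eqP => [/finj|->//]; apply.
Qed.

Lemma push_injective_on (Y Z : Type) (y0 : Y) (z0 : Z) (f : Y -> Z)
    (s : seq {classic Y}) (g1 g2 : Y -> A) :
  f y0 = z0 -> y0 \in s -> {in s &, injective f} ->
  (forall y, g1 y != 0 -> y \in s) -> (forall y, g2 y != 0 -> y \in s) ->
  g1 y0 = 0 -> g2 y0 = 0 -> push z0 f g1 = push z0 f g2 -> g1 = g2.
Proof.
move=> fy0 y0s finj sup1 sup2 g1y0 g2y0 e; apply/funext => x.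
have [->|xy0] := pselect (x = y0); first by rewrite g1y0 g2y0.
have [xs|xs] := boolP (x \in s); last first.
  have [/eqP g1x /eqP g2x] : g1 x == 0 /\ g2 x == 0.
    by split; apply: contraNT xs; [apply: sup1|apply: sup2].
  by rewrite g1x g2x.
have fx : f x <> z0 by rewrite -fy0 => /(finj _ _ xs y0s).
by rewrite -(push_at sup1 finj xs fx) -(push_at sup2 finj xs fx) e.
Qed.
End Push.

Section Directed.
Variables (d : Order.disp_t) (T : porderType d).
Hypothesis T_directed : aleph1_directed T.

Lemma finite_upper_bound (s : seq T) : exists u, forall t, t \in s -> (t <= u)%O.
Proof.
have [u ub] := T_directed (finite_set_countable (finite_seq s)).
by exists u => t ts; apply: ub.
Qed.

(* A monotone nat-valued function attains a maximum: were it unbounded, countably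
   many stages with values beyond every bound would have a common upper bound. *)
Lemma monotone_nat_max (n : T -> nat) :
  {homo n : s t / (s <= t)%O >-> (s <= t)%N} -> exists t0, forall t, (n t <= n t0)%N.
Proof.
move=> n_mono.
have [B nB] : exists B, forall t, (n t <= B)%N.
  apply: contrapT => unbounded.
  have /choice [f nf] : forall B, exists t, (B < n t)%N.
    move=> B; apply: contrapT => /forallNP small; apply: unbounded; exists B => t.
    by rewrite leqNgt; apply/negP/small.
  have [u ub] := T_directed (card_le_trans (card_image_le f setT) (countableP setT)).
  by have := nf (n u); rewrite ltnNge n_mono //; apply: ub; exists (n u).
have [u _] := finite_upper_bound [::].
have value_ex : exists i, `[< exists t, n t = i >] by exists (n u); apply/asboolP; exists u.
have value_le i : `[< exists t, n t = i >] -> (i <= B)%N by move=> /asboolP [t <-].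
case: (ex_maxnP value_ex value_le) => _ /asboolP [t0 <-] t0_max.
by exists t0 => t; apply: t0_max; apply/asboolP; exists t.
Qed.
End Directed.

Section Limit.
Variables (d : Order.disp_t) (T : porderType d) (X : pdiagram T).

Lemma limX_eq (x y : limX X) : (forall t, proj t x = proj t y) -> x = y.
Proof.
case: x y => [x x_compat] [y y_compat]; rewrite /proj /= => xy.
have e : x = y by apply: functional_extensionality_dep.
by subst; congr exist; apply: Prop_irrelevance.
Qed.

Lemma proj_dmap s t (h : (s <= t)%O) (x : limX X) : dmap h (proj t x) = proj s x.
Proof. by case: x. Qed.

Lemma rho_Glim (A : zmodType) (g : limX X -> A) :
  smash (limX_pt X) g -> Glim X A (rho X g).
Proof.
case=> _ fin; split => [t|s t h]; first exact: push_smash.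
rewrite /rho push_comp ?dmap_pt //; congr push; apply/funext => x /=.
exact: proj_dmap.
Qed.

Hypothesis T_directed : aleph1_directed T.

(* Finitely many distinct points of the limit are already distinct at a single stage:
   separate each pair at some stage and go above all these stages. *)
Lemma lim_separated (l : seq {classic (limX X)}) :
  exists u, {in l &, injective (proj u)}.
Proof.
have [t0 _] := finite_upper_bound T_directed [::].
have /choice [w w_sep] : forall xy : limX X * limX X,
    exists t, xy.1 <> xy.2 -> proj t xy.1 <> proj t xy.2.
  move=> [x y]; have [->|nxy] := pselect (x = y); first by exists t0.
  suff [t nt] : exists t, proj t x <> proj t y by exists t.
  apply: contra_notP nxy => /forallNP same; apply: limX_eq => t.
  exact: contra_notP (same t).
have [u ub] := finite_upper_bound T_directed [seq w (x, y) | x <- l, y <- l].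
exists u => x y xl yl exy; apply: contrapT => nxy; apply: (w_sep (x, y) nxy).
have wu : (w (x, y) <= u)%O.
  by apply: ub; apply: (allpairs_f (fun x y : {classic (limX X)} => w (x, y))).
by rewrite /= -(proj_dmap wu x) -(proj_dmap wu y) exy.
Qed.

(* [rho] is injective: at a stage separating the supports, [rho] is a relabelling. *)
Lemma rho_injective (A : zmodType) (g1 g2 : limX X -> A) :
  smash (limX_pt X) g1 -> smash (limX_pt X) g2 -> rho X g1 = rho X g2 -> g1 = g2.
Proof.
case=> g1pt fin1 [g2pt fin2] e.
pose l := (limX_pt X : {classic (limX X)}) :: supp_enum g1 ++ supp_enum g2.
have supp1 (x : {classic (limX X)}) : g1 x != 0 -> x \in l.
  by move=> g1x; rewrite inE mem_cat mem_supp_enum // g1x orbT.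
have supp2 (x : {classic (limX X)}) : g2 x != 0 -> x \in l.
  by move=> g2x; rewrite inE mem_cat (mem_supp_enum fin2) g2x !orbT.
have [u proj_inj] := lim_separated l.
apply: (push_injective_on (y0 := limX_pt X) _ (mem_head _ _) proj_inj supp1 supp2) => //.
exact: (congr1 (fun G => G u) e).
Qed.
End Limit.

Section Surjectivity.
Variables (d : Order.disp_t) (T : porderType d) (X : pdiagram T) (A : zmodType).
Hypothesis T_directed : aleph1_directed T.
Local Unset Implicit Arguments.
Variable G : forall t, X t -> A.
Hypothesis G_lim : Glim X A G.
Local Set Implicit Arguments.

Lemma G_finite t : finite_set [set y | G t y != 0].
Proof. exact: (G_lim.1 t).2. Qed.

Lemma G_compat s t (h : (s <= t)%O) : push (pt X s) (dmap h) (G t) = G s.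
Proof. exact: G_lim.2. Qed.

Definition Gsupp t : seq {classic (X t)} := supp_enum (G t).

Lemma Gsupp_uniq t : uniq (Gsupp t).
Proof. exact: supp_enum_uniq. Qed.

Lemma mem_Gsupp t (y : {classic (X t)}) : (y \in Gsupp t) = (G t y != 0).
Proof. exact: (mem_supp_enum (G_finite t) y). Qed.

Lemma Gsupp_pt t : (pt X t : {classic (X t)}) \notin Gsupp t.
Proof. by rewrite mem_Gsupp (G_lim.1 t).1 eqxx. Qed.

Lemma lift_Gsupp s t (h : (s <= t)%O) (y : {classic (X s)}) :
  y \in Gsupp s -> exists2 y' : {classic (X t)}, y' \in Gsupp t & dmap h y' = y.
Proof.
rewrite mem_Gsupp -(G_compat h) => Gy; have [_ [y' ey Gy']] := push_neq0 Gy.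
by exists y'; rewrite ?mem_Gsupp.
Qed.

Lemma size_Gsupp_mono :
  {homo (fun t => size (Gsupp t)) : s t / (s <= t)%O >-> (s <= t)%N}.
Proof.
move=> s t h; rewrite -(size_map (fun y : {classic (X t)} => dmap h y : {classic (X s)})).
by apply: uniq_leq_size (Gsupp_uniq s) _ => y /(lift_Gsupp h) [y' y'S <-]; apply: map_f.
Qed.

(* [t0] is a stage of maximal support size (one exists by ℵ1-directedness);
   above [t0] the transition maps restrict to bijections of supports. *)
Variable t0 : T.
Hypothesis t0_max : forall t, (size (Gsupp t) <= size (Gsupp t0))%N.

Lemma Gsupp_above u (h : (t0 <= u)%O) :
  uniq [seq (dmap h y : {classic (X t0)}) | y <- Gsupp u] /\
  Gsupp t0 =i [seq (dmap h y : {classic (X t0)}) | y <- Gsupp u].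
Proof.
have sub : {subset Gsupp t0 <= [seq (dmap h y : {classic (X t0)}) | y <- Gsupp u]}.
  by move=> y /(lift_Gsupp h) [y' y'S <-]; apply: map_f.
have sz : (size [seq (dmap h y : {classic (X t0)}) | y <- Gsupp u] <= size (Gsupp t0))%N.
  by rewrite size_map t0_max.
split; first exact: leq_size_uniq (Gsupp_uniq t0) sub sz.
exact: (uniq_min_size (Gsupp_uniq t0) sub sz).2.
Qed.

Lemma dmap_Gsupp_inj u (h : (t0 <= u)%O) :
  {in Gsupp u &, injective (fun y : {classic (X u)} => dmap h y : {classic (X t0)})}.
Proof. by apply: uniq_map_inj_in; apply: (Gsupp_above h).1. Qed.

Lemma dmap_Gsupp u (h : (t0 <= u)%O) (y : {classic (X u)}) :
  y \in Gsupp u -> (dmap h y : {classic (X t0)}) \in Gsupp t0.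
Proof. by move=> yS; rewrite (Gsupp_above h).2 map_f. Qed.

(* [z] is the [s]-component of the thread through [y] when some support point
   above both [s] and [t0] projects to [y] and to [z]. *)
Definition thread_rel (y : X t0) (s : T) : set {classic (X s)} :=
  fun z => exists u (hs : (s <= u)%O) (h0 : (t0 <= u)%O) (y' : {classic (X u)}),
    [/\ y' \in Gsupp u, dmap h0 y' = y & dmap hs y' = z].
Arguments thread_rel : clear implicits.

Definition thread (y : X t0) (s : T) : X s :=
  xget (pt X s : {classic (X s)}) (thread_rel y s).

(* Threads are unique: two witnesses are compared in the support above both. *)
Lemma thread_rel_unique y s (z1 z2 : {classic (X s)}) :
  thread_rel y s z1 -> thread_rel y s z2 -> z1 = z2.
Proof.
move=> [u1 [hs1 [h01 [y1 [y1S e1 <-]]]]] [u2 [hs2 [h02 [y2 [y2S e2 <-]]]]].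
have [u ub] := finite_upper_bound T_directed [:: u1; u2].
have h1 : (u1 <= u)%O by apply: ub; rewrite !inE eqxx.
have h2 : (u2 <= u)%O by apply: ub; rewrite !inE eqxx orbT.
have [y1' y1'S ey1] := lift_Gsupp h1 y1S; have [y2' y2'S ey2] := lift_Gsupp h2 y2S.
subst y1 y2.
have h0 := le_trans h01 h1.
have -> : y1' = y2'.
  apply: (dmap_Gsupp_inj (h := h0) y1'S y2'S) => /=.
  by rewrite -(dmap_comp h01 h1 h0) -(dmap_comp h02 h2 h0) e1 e2.
by rewrite (dmap_comp hs1 h1 (le_trans hs1 h1)) (dmap_comp hs2 h2 (le_trans hs1 h1)).
Qed.

Lemma thread_spec s u (hs : (s <= u)%O) (h0 : (t0 <= u)%O) (y' : {classic (X u)}) :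
  y' \in Gsupp u -> thread (dmap h0 y') s = dmap hs y'.
Proof.
move=> y'S; have rel : thread_rel (dmap h0 y') s (dmap hs y') by exists u, hs, h0, y'.
exact: thread_rel_unique (xgetI _ rel) rel.
Qed.

(* Off the support of [G t0] there is no thread, so [thread] returns base points. *)
Lemma thread_out (y : X t0) s :
  (y : {classic (X t0)}) \notin Gsupp t0 -> thread y s = pt X s.
Proof.
move=> yS; apply: (@xgetPN {classic (X s)}) => z [u [hs [h0 [y' [y'S ey _]]]]].
by move: yS; rewrite -ey dmap_Gsupp.
Qed.

Lemma thread_compat (y : X t0) s' s (h : (s' <= s)%O) :
  dmap h (thread y s) = thread y s'.
Proof.
have [yS|yS] := boolP ((y : {classic (X t0)}) \in Gsupp t0); last first.
  by rewrite !thread_out // dmap_pt.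
have [u ub] := finite_upper_bound T_directed [:: s; t0].
have hs : (s <= u)%O by apply: ub; rewrite !inE eqxx.
have h0 : (t0 <= u)%O by apply: ub; rewrite !inE eqxx orbT.
have [y' y'S ey] := lift_Gsupp h0 yS; subst y.
rewrite (thread_spec hs) // (thread_spec (le_trans h hs)) //.
exact: dmap_comp.
Qed.

Definition thread_lim (y : X t0) : limX X :=
  @exist _ (fun x => forall s t (h : (s <= t)%O), dmap h (x t) = x s)
    (thread y) (fun s t h => thread_compat y h).

Definition rho_preimage : limX X -> A := push (limX_pt X) thread_lim (G t0).

Lemma rho_preimage_smash : smash (limX_pt X) rho_preimage.
Proof. exact/push_smash/G_finite. Qed.

(* At each stage [s], compare through a stage [u] above [s] and [t0]: both sides
   are pushforwards of [G u], along maps that agree on its support. *)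
Lemma rho_preimage_spec : rho X rho_preimage = G.
Proof.
apply: functional_extensionality_dep => s.
have [u ub] := finite_upper_bound T_directed [:: s; t0].
have hs : (s <= u)%O by apply: ub; rewrite !inE eqxx.
have h0 : (t0 <= u)%O by apply: ub; rewrite !inE eqxx orbT.
have thread_pt : thread (pt X t0) s = pt X s by rewrite thread_out ?Gsupp_pt.
rewrite /rho /rho_preimage push_comp //; last exact: G_finite.
rewrite -(G_compat hs) -(G_compat h0) push_comp //; last exact: G_finite.
by apply: push_ext => y' Gy' /=; apply: thread_spec; rewrite mem_Gsupp.
Qed.
End Surjectivity.

Lemma rho_surjective (d : Order.disp_t) (T : porderType d) (X : pdiagram T) (A : zmodType)
    (T_directed : aleph1_directed T) (G : forall t, X t -> A) :
  Glim X A G -> exists g : limX X -> A, smash (limX_pt X) g /\ rho X g = G.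
Proof.
move=> G_lim.
have [t0 t0_max] := monotone_nat_max T_directed (size_Gsupp_mono G_lim).
exists (rho_preimage T_directed G_lim t0_max).
by split; [apply: rho_preimage_smash|apply: rho_preimage_spec].
Qed.

Unset Implicit Arguments.
Local Close Scope ring_scope.
Local Close Scope classical_set_scope.

Theorem mainTheorem10 (d : Order.disp_t) (T : porderType d)
    (HT : aleph1_directed T) (X : pdiagram T) (A : zmodType) :
  [/\ forall g : limX X -> A, smash (limX_pt X) g -> Glim X A (rho X g),
      forall g1 g2 : limX X -> A, smash (limX_pt X) g1 -> smash (limX_pt X) g2 ->
                    rho X g1 = rho X g2 -> g1 = g2
    & forall G, Glim X A G ->
        exists g : limX X -> A, smash (limX_pt X) g /\ rho X g = G].
Proof.
split.
- exact: rho_Glim.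
- exact: (rho_injective HT).
- exact: (rho_surjective HT).
Qed.
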